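(* Let $M\ge3$ be an integer and $p\in[2,\infty]$. For every continuous $M$-linear form $T:X_p\times X_\infty\times\cdots\times X_\infty\to\mathbb{R}$, \[ \left(\sum_{i_1=1}^\infty\left(\sum_{i_2,\dots,i_M=1}^\infty|T(e_{i_1},\dots,e_{i_M})|^2\right)^{\frac12\cdot\frac{p}{p-1}}\right)^{\frac{p-1}{p}}\le\left(\mathrm{A}_{\frac{p}{p-1}}\right)^{M-1}\|T\|. \] Hence the optimal constant $C_{(M),p}$ satisfies $C_{(M),p}\le(\mathrm{A}_{p/(p-1)})^{M-1}$.
   Context: Scalars are real. $X_p=\ell_p$ for $1\le p<\infty$, $X_\infty=c_0$, $(e_k)$ canonical unit vectors. For a continuous $M$-linear form $T:X_{p_1}\times\cdots\times X_{p_M}\to\mathbb{R}$, $\|T\|=\sup\{|T(x^{(1)},\dots,x^{(M)})|:\|x^{(k)}\|_{X_{p_k}}\le1\}$. $p/(p-1)$ is read as $1$ when $p=\infty$. $r_j(t)=\operatorname{sign}(\sin(2^j\pi t))$ are the Rademacher functions, and for $0<r<\infty$, $\mathrm{A}_r$ is the optimal constant such that $\left(\sum_{j=1}^n|a_j|^2\right)^{1/2}\le \mathrm{A}_r\left(\int_0^1|\sum_{j=1}^n a_jr_j(t)|^rdt\right)^{1/r}$ for all $n$ and real $a_j$. $C_{(M),p}$ denotes the optimal constant $C$ in the displayed inequality (with $C$ in place of $(\mathrm{A}_{p/(p-1)})^{M-1}$) over all such $T$. *)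

From Stdlib Require Import Reals Lra Lia.
Open Scope R_scope.

(** Nonnegative real power: [rpow x r = x^r] for [x > 0], and [0] for [x <= 0]
    (used only with [x >= 0] and [r > 0], where [0^r = 0]). *)
Definition rpow (x r : R) : R :=
  if Rlt_dec 0 x then Rpower x r else 0.

Fixpoint fsum (n : nat) (f : nat -> R) : R :=
  match n with O => 0 | S m => fsum m f + f m end.

(** Exponents p in [1, oo]: [Fin p] or [Inf]. *)
Inductive Exp := Fin (p : R) | Inf.

Definition conj_exp (e : Exp) : R :=
  match e with Fin p => p / (p - 1) | Inf => 1 end.

(** X_p = l_p (p finite), X_oo = c_0; sequences are [nat -> R]
    (index 0 corresponds to the paper's index 1). *)
Definition inX (e : Exp) (x : nat -> R) : Prop :=
  match e with
  | Fin p => exists S, infinite_sum (fun i => rpow (Rabs (x i)) p) S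
  | Inf => Un_cv x 0
  end.

Definition inBall (e : Exp) (x : nat -> R) : Prop :=
  match e with
  | Fin p => exists S, infinite_sum (fun i => rpow (Rabs (x i)) p) S
                       /\ rpow S (/ p) <= 1
  | Inf => Un_cv x 0 /\ forall i, Rabs (x i) <= 1
  end.

Definition evec (i : nat) : nat -> R := fun j => if Nat.eq_dec i j then 1 else 0.

Definition slot (e : Exp) (k : nat) : Exp :=
  match k with O => e | S _ => Inf end.

(** An M-linear form is modelled as T : (nat -> (nat -> R)) -> R, where
    x k is the k-th argument (only k < M is relevant). *)
Definition upd (x : nat -> nat -> R) (k : nat) (v : nat -> R) : nat -> nat -> R :=
  fun j => if Nat.eq_dec j k then v else x j.

Definition depends_on_first (M : nat) (T : (nat -> nat -> R) -> R) : Prop :=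
  forall x y, (forall k, (k < M)%nat -> x k = y k) -> T x = T y.

Definition is_multilinear (M : nat) (e : Exp) (T : (nat -> nat -> R) -> R) : Prop :=
  forall (x : nat -> nat -> R) (k : nat) (y : nat -> R) (a : R),
    (k < M)%nat ->
    (forall j, (j < M)%nat -> inX (slot e j) (x j)) ->
    inX (slot e k) y ->
    T (upd x k (fun i => a * x k i + y i)) = a * T x + T (upd x k y).

(** The set { |T(x^(1),...,x^(M))| : ||x^(k)|| <= 1 }; its lub is ||T||
    (its existence expresses continuity = boundedness). *)
Definition norm_set (M : nat) (e : Exp) (T : (nat -> nat -> R) -> R) (v : R) : Prop :=
  exists x : nat -> nat -> R,
    (forall k, (k < M)%nat -> inBall (slot e k) (x k)) /\ v = Rabs (T x).

Definition sgn (x : R) : R :=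
  if Rlt_dec 0 x then 1 else if Rlt_dec x 0 then -1 else 0.
Definition rad (j : nat) (t : R) : R := sgn (sin (2 ^ j * PI * t)).

(** C is an admissible constant in Khinchin's inequality with exponent r:
    for all n and a_1..a_n (here a (S j), j < n),
    (sum |a_j|^2)^(1/2) <= C (int_0^1 |sum a_j r_j(t)|^r dt)^(1/r). *)
Definition khin_adm (r C : R) : Prop :=
  forall (n : nat) (a : nat -> R),
    exists pr : Riemann_integrable
                  (fun t => rpow (Rabs (fsum n (fun j => a (S j) * rad (S j) t))) r) 0 1,
      sqrt (fsum n (fun j => Rsqr (Rabs (a (S j)))))
        <= C * rpow (RiemannInt pr) (/ r).

Definition is_khinchin_const (r A : R) : Prop :=
  (forall C, khin_adm r C -> A <= C) /\
  (forall B, (forall C, khin_adm r C -> B <= C) -> B <= A).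

(** Sum of g(idx) over idx with idx k < n for k < d (idx k = 0 for k >= d). *)
Fixpoint multi_sum (d n : nat) (g : (nat -> nat) -> R) : R :=
  match d with
  | O => g (fun _ => O)
  | S d' => fsum n (fun i =>
              multi_sum d' n (fun idx => g (fun k => match k with O => i | S k' => idx k' end)))
  end.

(** Truncation at indices < n of the left-hand side of the inequality:
    ( sum_{i1} ( sum_{i2..iM} |T(e_i1,...,e_iM)|^2 )^{q/2} )^{1/q}, q = conj_exp e. *)
Definition lhs_trunc (M : nat) (e : Exp) (T : (nat -> nat -> R) -> R) (n : nat) : R :=
  let q := conj_exp e in
  rpow (fsum n (fun i1 =>
          rpow (multi_sum (M - 1) n (fun idx =>
                  Rsqr (Rabs (T (fun k => match k with
                                          | O => evec i1
                                          | S k' => evec (idx k') end)))))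
               (q / 2)))
       (/ q).

Definition exp_ge2 (e : Exp) : Prop :=
  match e with Fin p => 2 <= p | Inf => True end.

From Stdlib Require Import Reals Lra Lia FunctionalExtensionality Classical.
From Coquelicot Require Import Coquelicot.
Open Scope R_scope.

(* Write q = p/(p-1), so 1 <= q <= 2, and fix an admissible Khinchin constant C.  Taking the last
   M-1 arguments of T to be x_k = sum_(j<n) s^(k)_j e_j for independent sign sequences s^(k), the
   value T(e_i, x_2, ..., x_M) is a Rademacher chaos whose coefficients are the T(e_i, e_i2, ...).
   The multiple Khinchin inequality, obtained by induction from the one-variable one together with
   Minkowski's inequality in l^(2/q), bounds the l^2 norm of these coefficients by C^(M-1) times
   the L^q norm of the chaos.  Summing q-th powers over i and exchanging sum and average, what
   remains is the l^q norm of the functional i |-> T(e_i, x_2, ..., x_M) on X_p, which by duality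
   is at most ||T|| because every x_k lies in the unit ball of c_0.  Finally the bound
   C^(M-1) ||T|| passes to the infimum A of the admissible constants. *)

Lemma rpow_Rpower x r : 0 < x -> rpow x r = Rpower x r.
Proof. intros; unfold rpow; destruct (Rlt_dec 0 x); [auto|lra]. Qed.

Lemma rpow_0_l r : rpow 0 r = 0.
Proof. unfold rpow; destruct (Rlt_dec 0 0); lra. Qed.

Lemma rpow_gt0 x r : 0 < x -> 0 < rpow x r.
Proof. intros; rewrite rpow_Rpower by auto; apply exp_pos. Qed.

Lemma rpow_ge0 x r : 0 <= rpow x r.
Proof. destruct (Rlt_dec 0 x); [left; apply rpow_gt0|unfold rpow; destruct (Rlt_dec 0 x)]; lra. Qed.

Lemma rpow_1_r x : 0 <= x -> rpow x 1 = x.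
Proof. intros [H|<-]; [rewrite rpow_Rpower; [apply Rpower_1|]|apply rpow_0_l]; auto. Qed.

Lemma rpow_1_l r : rpow 1 r = 1.
Proof. rewrite rpow_Rpower by lra; unfold Rpower; rewrite ln_1, Rmult_0_r; apply exp_0. Qed.

Lemma rpow_rpow x a b : 0 <= x -> rpow (rpow x a) b = rpow x (a * b).
Proof.
  intros [H|<-]; [|rewrite !rpow_0_l; auto].
  rewrite !(rpow_Rpower x), rpow_Rpower by (auto; apply exp_pos). apply Rpower_mult.
Qed.

Lemma rpow_mult_distr x y r : 0 <= x -> 0 <= y -> rpow (x * y) r = rpow x r * rpow y r.
Proof.
  intros [H|<-] [H'|<-]; rewrite ?Rmult_0_l, ?Rmult_0_r, ?rpow_0_l; try ring.
  rewrite !rpow_Rpower by nra. symmetry; apply Rpower_mult_distr; auto.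
Qed.

Lemma rpow_plus x a b : 0 < x -> rpow x (a + b) = rpow x a * rpow x b.
Proof. intros; rewrite !rpow_Rpower; auto; apply Rpower_plus. Qed.

Lemma rpow_opp x r : 0 < x -> rpow x (- r) = / rpow x r.
Proof. intros; rewrite !rpow_Rpower by auto; apply Rpower_Ropp. Qed.

Lemma rpow_le_l x y r : 0 <= x <= y -> 0 <= r -> rpow x r <= rpow y r.
Proof.
  intros [[H|<-] Hxy] Hr; [|rewrite rpow_0_l; apply rpow_ge0].
  rewrite !rpow_Rpower by lra. apply Rle_Rpower_l; lra.
Qed.

Lemma rpow_inv_l x r : 0 < x -> rpow (/ x) r = / rpow x r.
Proof.
  intros H. assert (E : rpow (/ x) r * rpow x r = 1).
  { rewrite <- rpow_mult_distr, Rinv_l by (try left; try apply Rinv_0_lt_compat; lra).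
    apply rpow_1_l. }
  pose proof (rpow_gt0 x r H). field_simplify_eq; lra.
Qed.

Lemma rpow_div_l x y r : 0 <= x -> 0 < y -> rpow (x / y) r = rpow x r / rpow y r.
Proof.
  intros. unfold Rdiv. rewrite rpow_mult_distr, rpow_inv_l; auto.
  left; apply Rinv_0_lt_compat; auto.
Qed.

Lemma rpow_rpow_inv x r : 0 <= x -> r <> 0 -> rpow (rpow x r) (/ r) = x.
Proof. intros; rewrite rpow_rpow, Rinv_r; auto; apply rpow_1_r; auto. Qed.

Lemma rpow_inv_rpow x r : 0 <= x -> r <> 0 -> rpow (rpow x (/ r)) r = x.
Proof. intros; rewrite rpow_rpow, Rinv_l; auto; apply rpow_1_r; auto. Qed.

Lemma rpow_eq0 x r : 0 <= x -> rpow x r = 0 -> x = 0.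
Proof. intros [H|H] E; auto. pose proof (rpow_gt0 x r H); lra. Qed.

Lemma rpow_sqrt x : 0 <= x -> rpow x (/ 2) = sqrt x.
Proof.
  intros [H|<-]; [rewrite rpow_Rpower; [apply Rpower_sqrt|]|rewrite rpow_0_l, sqrt_0]; auto.
Qed.

Lemma rpow_2 x : 0 <= x -> rpow x 2 = x * x.
Proof.
  intros [H|<-]; [|rewrite rpow_0_l; ring].
  rewrite rpow_Rpower by auto. replace 2 with (INR 2) by (simpl; ring).
  rewrite Rpower_pow by auto. simpl; ring.
Qed.

Lemma fsum_ext n f g : (forall i, (i < n)%nat -> f i = g i) -> fsum n f = fsum n g.
Proof. induction n; simpl; intros H; auto. rewrite IHn, H by (auto; lia); auto. Qed.

Lemma fsum_plus n f g : fsum n (fun i => f i + g i) = fsum n f + fsum n g.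
Proof. induction n; simpl; [ring|rewrite IHn; ring]. Qed.

Lemma fsum_scal n c f : c * fsum n f = fsum n (fun i => c * f i).
Proof. induction n; simpl; [ring|rewrite <- IHn; ring]. Qed.

Lemma fsum_zero n : fsum n (fun _ => 0) = 0.
Proof. induction n; simpl; auto; rewrite IHn; ring. Qed.

Lemma fsum_le n f g : (forall i, (i < n)%nat -> f i <= g i) -> fsum n f <= fsum n g.
Proof.
  induction n; simpl; intros H; [lra|].
  pose proof (H n (Nat.lt_succ_diag_r n)). enough (fsum n f <= fsum n g) by lra.
  apply IHn; intros; apply H; lia.
Qed.

Lemma fsum_ge0 n f : (forall i, (i < n)%nat -> 0 <= f i) -> 0 <= fsum n f.
Proof. intros; rewrite <- (fsum_zero n); apply fsum_le; auto. Qed.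

Lemma fsum_eq0 n f : (forall i, (i < n)%nat -> 0 <= f i) -> fsum n f = 0 ->
  forall i, (i < n)%nat -> f i = 0.
Proof.
  induction n; simpl; intros H E i Hi; [lia|].
  assert (0 <= fsum n f) by (apply fsum_ge0; intros; apply H; lia).
  assert (0 <= f n) by (apply H; lia).
  destruct (Nat.eq_dec i n); [subst; lra|]. apply IHn; [intros; apply H; lia|lra|lia].
Qed.

(** * The [l^s] norm on finitely many coordinates *)

Lemma derivable_pt_lim_Rpower_sub s c : 0 < c ->
  derivable_pt_lim (fun x => Rpower x s - s * x) c (s * Rpower c (s - 1) - s).
Proof.
  intros Hc. apply derivable_pt_lim_minus; [apply derivable_pt_lim_power; auto|].
  replace s with (s * 1) at 2 by ring. apply derivable_pt_lim_scal, derivable_pt_lim_id.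
Qed.

(* By the mean value theorem applied to [x^s - s x], whose derivative has the sign of [x - 1]. *)
Lemma bernoulli_rpow t s : 0 <= t -> 1 <= s -> 1 + s * (t - 1) <= rpow t s.
Proof.
  intros [Ht|<-] Hs; [|rewrite rpow_0_l; nra].
  rewrite rpow_Rpower by auto.
  assert (E1 : Rpower 1 s = 1) by (rewrite <- rpow_Rpower by lra; apply rpow_1_l).
  destruct (Rtotal_order t 1) as [Hlt|[->|Hgt]]; [| lra |].
  - destruct (MVT_cor2 (fun x => Rpower x s - s * x) (fun c => s * Rpower c (s - 1) - s) t 1 Hlt)
      as [c [E Hc]]; [intros; apply derivable_pt_lim_Rpower_sub; lra|].
    assert (Rpower c (s - 1) <= 1).
    { unfold Rpower. apply Rle_trans with (exp 0); [|rewrite exp_0; lra].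
      assert (ln c < 0) by (rewrite <- ln_1; apply ln_increasing; lra).
      destruct (Req_dec s 1) as [->|Hs1]; [right; f_equal; ring|].
      left; apply exp_increasing; nra. }
    assert (0 <= (s - s * Rpower c (s - 1)) * (1 - t)) by (apply Rmult_le_pos; nra). lra.
  - destruct (MVT_cor2 (fun x => Rpower x s - s * x) (fun c => s * Rpower c (s - 1) - s) 1 t Hgt)
      as [c [E Hc]]; [intros; apply derivable_pt_lim_Rpower_sub; lra|].
    assert (1 <= Rpower c (s - 1)).
    { apply Rle_trans with (Rpower c 0); [rewrite Rpower_O; lra|apply Rle_Rpower; lra]. }
    assert (0 <= (s * Rpower c (s - 1) - s) * (t - 1)) by (apply Rmult_le_pos; nra). lra.
Qed.

(* The tangent line of [x^s] at [c = l a + (1 - l) b] lies below it at [a] and at [b]. *)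
Lemma rpow_convex a b l s : 0 <= a -> 0 <= b -> 0 <= l <= 1 -> 1 <= s ->
  rpow (l * a + (1 - l) * b) s <= l * rpow a s + (1 - l) * rpow b s.
Proof.
  intros Ha Hb Hl Hs. set (c := l * a + (1 - l) * b).
  pose proof (rpow_ge0 a s); pose proof (rpow_ge0 b s).
  assert (Hc : 0 <= c) by (unfold c; nra).
  destruct Hc as [Hc|Hc]; [|rewrite <- Hc, rpow_0_l; nra].
  set (P := rpow c s). assert (HP : 0 < P) by (apply rpow_gt0; auto).
  assert (tangent : forall x, 0 <= x -> P * (1 + s * (x / c - 1)) <= rpow x s).
  { intros x Hx. pose proof (bernoulli_rpow (x / c) s) as B.
    rewrite rpow_div_l in B by lra. fold P in B.
    apply (Rmult_le_compat_l P) in B; [|lra|apply Rdiv_le_0_compat|]; try lra.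
    replace (P * (rpow x s / P)) with (rpow x s) in B by (field; lra). exact B. }
  assert (Id : l * (P * (1 + s * (a / c - 1))) + (1 - l) * (P * (1 + s * (b / c - 1))) = P)
    by (unfold c in *; field; lra).
  pose proof (Rmult_le_compat_l l _ _ (proj1 Hl) (tangent a Ha)).
  pose proof (Rmult_le_compat_l (1 - l) _ _ ltac:(lra) (tangent b Hb)). lra.
Qed.

Definition lnorm (s : R) (m : nat) (u : nat -> R) : R :=
  rpow (fsum m (fun i => rpow (u i) s)) (/ s).

Lemma lnorm_ge0 s m u : 0 <= lnorm s m u.
Proof. apply rpow_ge0. Qed.

Lemma lnorm_ext s m u v : (forall i, (i < m)%nat -> u i = v i) -> lnorm s m u = lnorm s m v.
Proof. intros H; unfold lnorm; f_equal; apply fsum_ext; intros; rewrite H; auto. Qed.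

Lemma lnorm_rpow_s s m u : 0 < s -> rpow (lnorm s m u) s = fsum m (fun i => rpow (u i) s).
Proof.
  intros Hs. unfold lnorm. rewrite rpow_rpow, Rinv_l by (try apply fsum_ge0; intros; try apply rpow_ge0; lra).
  apply rpow_1_r, fsum_ge0; intros; apply rpow_ge0.
Qed.

Lemma lnorm_scal s m c u : 0 < s -> 0 <= c -> (forall i, (i < m)%nat -> 0 <= u i) ->
  lnorm s m (fun i => c * u i) = c * lnorm s m u.
Proof.
  intros Hs Hc Hu. unfold lnorm.
  rewrite (fsum_ext m _ (fun i => rpow c s * rpow (u i) s)) by (intros; apply rpow_mult_distr; auto).
  rewrite <- fsum_scal, rpow_mult_distr, rpow_rpow_inv; auto; try lra.
  - apply rpow_ge0.
  - apply fsum_ge0; intros; apply rpow_ge0.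
Qed.

Lemma lnorm_le s m u v : 0 < s -> (forall i, (i < m)%nat -> 0 <= u i <= v i) ->
  lnorm s m u <= lnorm s m v.
Proof.
  intros Hs H. unfold lnorm. apply rpow_le_l; [|left; apply Rinv_0_lt_compat; auto].
  split; [apply fsum_ge0; intros; apply rpow_ge0|].
  apply fsum_le; intros; apply rpow_le_l; [apply H; auto|lra].
Qed.

Lemma lnorm_eq0 s m u : 0 < s -> (forall i, (i < m)%nat -> 0 <= u i) -> lnorm s m u = 0 ->
  forall i, (i < m)%nat -> u i = 0.
Proof.
  intros Hs Hu E i Hi. apply rpow_eq0 in E; [|apply fsum_ge0; intros; apply rpow_ge0].
  apply (rpow_eq0 _ s); auto. apply (fsum_eq0 m (fun i => rpow (u i) s)); auto.
  intros; apply rpow_ge0.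
Qed.

Lemma rpow_lnorm s t m u : 0 < s -> 0 < t -> (forall i, (i < m)%nat -> 0 <= u i) ->
  rpow (lnorm s m u) t = lnorm (s / t) m (fun i => rpow (u i) t).
Proof.
  intros Hs Ht Hu. unfold lnorm.
  rewrite (fsum_ext m (fun i => rpow (rpow (u i) t) (s / t)) (fun i => rpow (u i) s)).
  - rewrite rpow_rpow by (apply fsum_ge0; intros; apply rpow_ge0). f_equal. field; lra.
  - intros i Hi. rewrite rpow_rpow by auto. f_equal. field; lra.
Qed.

Lemma sqrt_fsum_lnorm2 m y : (forall i, (i < m)%nat -> 0 <= y i) ->
  sqrt (fsum m y) = lnorm 2 m (fun i => sqrt (y i)).
Proof.
  intros Hy. unfold lnorm. rewrite <- rpow_sqrt by (apply fsum_ge0; auto). f_equal.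
  apply fsum_ext; intros i Hi. rewrite rpow_2, sqrt_sqrt by (auto; apply sqrt_pos). auto.
Qed.

Lemma lnorm_le_of_normalized s m u c : 0 < s -> 0 < c -> (forall i, (i < m)%nat -> 0 <= u i) ->
  fsum m (fun i => rpow (u i / c) s) <= 1 -> lnorm s m u <= c.
Proof.
  intros Hs Hc Hu H.
  rewrite (fsum_ext m _ (fun i => / rpow c s * rpow (u i) s)), <- fsum_scal in H
    by (intros; rewrite rpow_div_l by auto; unfold Rdiv; ring).
  assert (Hcs : 0 < rpow c s) by (apply rpow_gt0; auto).
  assert (fsum m (fun i => rpow (u i) s) <= rpow c s).
  { apply (Rmult_le_reg_l (/ rpow c s)); [apply Rinv_0_lt_compat; auto|]. rewrite Rinv_l; lra. }
  unfold lnorm. rewrite <- (rpow_rpow_inv c s) by lra.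
  apply rpow_le_l; [split; [apply fsum_ge0; intros; apply rpow_ge0|auto]|].
  left; apply Rinv_0_lt_compat; lra.
Qed.

Lemma fsum_rpow_div_lnorm s m u : 0 < s -> (forall i, (i < m)%nat -> 0 <= u i) ->
  0 < lnorm s m u -> fsum m (fun i => rpow (u i / lnorm s m u) s) = 1.
Proof.
  intros Hs Hu0 Hu. set (a := lnorm s m u) in *.
  assert (Ha : 0 < rpow a s) by (apply rpow_gt0; auto).
  rewrite (fsum_ext m _ (fun i => / rpow a s * rpow (u i) s)).
  - rewrite <- fsum_scal. unfold a; rewrite <- lnorm_rpow_s by auto. fold a. field; lra.
  - intros; rewrite rpow_div_l by auto. unfold Rdiv; ring.
Qed.

(* Minkowski: [(u + v)/(a + b)] is the convex combination with weight [a/(a + b)] of the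
   normalized vectors [u/a] and [v/b], each of [l^s] norm 1. *)
Lemma lnorm_triangle s m u v : 1 <= s -> (forall i, (i < m)%nat -> 0 <= u i) ->
  (forall i, (i < m)%nat -> 0 <= v i) ->
  lnorm s m (fun i => u i + v i) <= lnorm s m u + lnorm s m v.
Proof.
  intros Hs Hu Hv.
  destruct (lnorm_ge0 s m u) as [Ha|Ha].
  2:{ rewrite (lnorm_ext s m _ v); [rewrite <- Ha; lra|].
      intros. rewrite (lnorm_eq0 s m u); auto; [ring|lra]. }
  destruct (lnorm_ge0 s m v) as [Hb|Hb].
  2:{ rewrite (lnorm_ext s m _ u); [rewrite <- Hb; lra|].
      intros. rewrite (lnorm_eq0 s m v); auto; [ring|lra]. }
  set (a := lnorm s m u) in *. set (b := lnorm s m v) in *. set (l := a / (a + b)).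
  assert (Hl : 0 <= l <= 1).
  { unfold l; split; [apply Rdiv_le_0_compat; lra|].
    apply (Rmult_le_reg_r (a + b)); [lra|]. field_simplify; lra. }
  apply lnorm_le_of_normalized; [lra|lra|intros; pose proof (Hu i H); pose proof (Hv i H); lra|].
  apply Rle_trans with (fsum m (fun i => l * rpow (u i / a) s + (1 - l) * rpow (v i / b) s)).
  - apply fsum_le; intros i Hi.
    replace ((u i + v i) / (a + b)) with (l * (u i / a) + (1 - l) * (v i / b))
      by (unfold l; field; lra).
    apply rpow_convex; auto; apply Rdiv_le_0_compat; auto.
  - rewrite fsum_plus, <- !fsum_scal. unfold a, b.
    rewrite !fsum_rpow_div_lnorm by (auto; lra). lra.
Qed.

(** * Averages over sign sequences *)

(* Sign sequences are indexed from 1 like the Rademacher functions; [push_sign a s] puts [a] in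
   position 1 and shifts [s] one step to the right, keeping position 0 at 0. *)
Definition push_sign (a : R) (s : nat -> R) : nat -> R :=
  fun j => match j with 0 => 0 | S 0 => a | S j' => s j' end.

(* [sign_avg N G] is the mean of [G s] over the [2^N] sign sequences [s] supported on [1..N]. *)
Fixpoint sign_avg (N : nat) (G : (nat -> R) -> R) : R :=
  match N with
  | O => G (fun _ => 0)
  | S N' => (sign_avg N' (fun s => G (push_sign 1 s)) + sign_avg N' (fun s => G (push_sign (-1) s))) / 2
  end.

Definition unit_bounded (s : nat -> R) : Prop := forall j, Rabs (s j) <= 1.

Lemma unit_bounded_push_sign a s : Rabs a <= 1 -> unit_bounded s -> unit_bounded (push_sign a s).
Proof. intros Ha Hs [|[|j]]; simpl; auto. rewrite Rabs_R0; lra. Qed.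

Lemma sign_avg_ext N F G : (forall s, F s = G s) -> sign_avg N F = sign_avg N G.
Proof. revert F G; induction N; simpl; intros; auto. f_equal; f_equal; apply IHN; auto. Qed.

Lemma sign_avg_plus N F G : sign_avg N (fun s => F s + G s) = sign_avg N F + sign_avg N G.
Proof.
  revert F G; induction N; simpl; intros; auto.
  rewrite (IHN (fun s => F (push_sign 1 s))), (IHN (fun s => F (push_sign (-1) s))). field.
Qed.

Lemma sign_avg_scal N c F : sign_avg N (fun s => c * F s) = c * sign_avg N F.
Proof.
  revert F; induction N; simpl; intros; auto.
  rewrite (IHN (fun s => F (push_sign 1 s))), (IHN (fun s => F (push_sign (-1) s))). field.
Qed.

Lemma sign_avg_const N c : sign_avg N (fun _ => c) = c.
Proof. induction N; simpl; auto. rewrite IHN; field. Qed.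

Lemma sign_avg_le N F G : (forall s, unit_bounded s -> F s <= G s) -> sign_avg N F <= sign_avg N G.
Proof.
  revert F G; induction N; simpl; intros F G H.
  - apply H. intros j; rewrite Rabs_R0; lra.
  - assert (sign_avg N (fun s => F (push_sign 1 s)) <= sign_avg N (fun s => G (push_sign 1 s))).
    { apply IHN; intros; apply H, unit_bounded_push_sign; auto. rewrite Rabs_R1; lra. }
    assert (sign_avg N (fun s => F (push_sign (-1) s)) <= sign_avg N (fun s => G (push_sign (-1) s))).
    { apply IHN; intros; apply H, unit_bounded_push_sign; auto. apply Rabs_le; lra. }
    lra.
Qed.

Lemma sign_avg_ge0 N F : (forall s, 0 <= F s) -> 0 <= sign_avg N F.
Proof. intros; rewrite <- (sign_avg_const N 0); apply sign_avg_le; auto. Qed.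

Lemma lnorm_sign_avg_le N s m h : 1 <= s -> (forall i σ, 0 <= h i σ) ->
  lnorm s m (fun i => sign_avg N (h i)) <= sign_avg N (fun σ => lnorm s m (fun i => h i σ)).
Proof.
  revert h; induction N; simpl; intros h Hs Hh; [lra|].
  set (P := fun i => sign_avg N (fun σ => h i (push_sign 1 σ))).
  set (Q := fun i => sign_avg N (fun σ => h i (push_sign (-1) σ))).
  assert (HP : forall i, 0 <= P i) by (intros; apply sign_avg_ge0; auto).
  assert (HQ : forall i, 0 <= Q i) by (intros; apply sign_avg_ge0; auto).
  rewrite (lnorm_ext s m _ (fun i => / 2 * (P i + Q i))) by (intros; unfold P, Q; field).
  rewrite lnorm_scal by (try lra; intros i _; pose proof (HP i); pose proof (HQ i); lra).
  pose proof (lnorm_triangle s m P Q Hs (fun i _ => HP i) (fun i _ => HQ i)).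
  pose proof (IHN (fun i σ => h i (push_sign 1 σ)) Hs (fun i σ => Hh i _)).
  pose proof (IHN (fun i σ => h i (push_sign (-1) σ)) Hs (fun i σ => Hh i _)).
  cbv beta in H0, H1. fold P in H0. fold Q in H1. lra.
Qed.

Definition block_cons (s : nat -> R) (Sg : nat -> nat -> R) : nat -> nat -> R :=
  fun k => match k with 0 => s | S k' => Sg k' end.

Fixpoint multi_sign_avg (d N : nat) (G : (nat -> nat -> R) -> R) : R :=
  match d with
  | O => G (fun _ _ => 0)
  | S d' => multi_sign_avg d' N (fun Sg => sign_avg N (fun s => G (block_cons s Sg)))
  end.

Definition unit_bounded_blocks (Sg : nat -> nat -> R) : Prop := forall k, unit_bounded (Sg k).

Lemma multi_sign_avg_ext d N F G : (forall Sg, F Sg = G Sg) -> multi_sign_avg d N F = multi_sign_avg d N G.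
Proof. revert F G; induction d; simpl; intros; auto. apply IHd; intros; apply sign_avg_ext; auto. Qed.

Lemma multi_sign_avg_plus d N F G :
  multi_sign_avg d N (fun Sg => F Sg + G Sg) = multi_sign_avg d N F + multi_sign_avg d N G.
Proof.
  revert F G; induction d; simpl; intros; auto.
  rewrite <- IHd. apply multi_sign_avg_ext; intros; apply sign_avg_plus.
Qed.

Lemma multi_sign_avg_scal d N c F : multi_sign_avg d N (fun Sg => c * F Sg) = c * multi_sign_avg d N F.
Proof.
  revert F; induction d; simpl; intros; auto.
  rewrite <- IHd. apply multi_sign_avg_ext; intros; apply sign_avg_scal.
Qed.

Lemma multi_sign_avg_const d N c : multi_sign_avg d N (fun _ => c) = c.
Proof.
  induction d; simpl; auto. transitivity (multi_sign_avg d N (fun _ => c)); auto.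
  apply multi_sign_avg_ext; intros; apply sign_avg_const.
Qed.

Lemma multi_sign_avg_fsum d N m F :
  multi_sign_avg d N (fun Sg => fsum m (fun i => F i Sg)) = fsum m (fun i => multi_sign_avg d N (F i)).
Proof.
  induction m; simpl; [apply multi_sign_avg_const|].
  rewrite (multi_sign_avg_plus d N (fun Sg => fsum m (fun i => F i Sg)) (F m)), IHm; auto.
Qed.

Lemma multi_sign_avg_le d N F G : (forall Sg, unit_bounded_blocks Sg -> F Sg <= G Sg) ->
  multi_sign_avg d N F <= multi_sign_avg d N G.
Proof.
  revert F G; induction d; simpl; intros F G H.
  - apply H. intros k j; rewrite Rabs_R0; lra.
  - apply IHd. intros Sg HSg. apply sign_avg_le. intros s Hs. apply H.
    intros [|k]; simpl; auto.
Qed.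

Lemma multi_sign_avg_ge0 d N F : (forall Sg, 0 <= F Sg) -> 0 <= multi_sign_avg d N F.
Proof. intros; rewrite <- (multi_sign_avg_const d N 0); apply multi_sign_avg_le; auto. Qed.

Lemma lnorm_multi_sign_avg_le d N s m h : 1 <= s -> (forall i Sg, 0 <= h i Sg) ->
  lnorm s m (fun i => multi_sign_avg d N (h i))
  <= multi_sign_avg d N (fun Sg => lnorm s m (fun i => h i Sg)).
Proof.
  revert h; induction d; simpl; intros h Hs Hh; [lra|].
  eapply Rle_trans.
  - apply (IHd (fun i Sg => sign_avg N (fun s0 => h i (block_cons s0 Sg)))); auto.
    intros; apply sign_avg_ge0; auto.
  - apply multi_sign_avg_le; intros Sg _. apply lnorm_sign_avg_le; auto.
Qed.

(** * Integrals of functions of the Rademacher functions *)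

Definition radvec (t : R) : nat -> R := fun j => rad j t.

Definition depends_on_signs (N : nat) (G : (nat -> R) -> R) : Prop :=
  forall s s', (forall j, (1 <= j <= N)%nat -> s j = s' j) -> G s = G s'.

Lemma rad_S j t : rad (S j) t = rad j (2 * t).
Proof. unfold rad. do 2 f_equal. simpl. ring. Qed.

Lemma rad_S_shift j t : (1 <= j)%nat -> rad (S j) t = rad j (2 * t - 1).
Proof.
  intros Hj. destruct j as [|j]; [lia|]. unfold rad. f_equal.
  rewrite <- (sin_period (2 ^ S j * PI * (2 * t - 1)) (Nat.pow 2 j)). f_equal.
  rewrite pow_INR. simpl. replace (1 + 1) with 2 by ring. ring.
Qed.

Lemma rad_1_left t : 0 < t < / 2 -> rad 1 t = 1.
Proof.
  intros H. unfold rad, sgn. pose proof PI_RGT_0.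
  assert (0 < sin (2 ^ 1 * PI * t)) by (apply sin_gt_0; simpl; nra).
  destruct (Rlt_dec 0 (sin (2 ^ 1 * PI * t))); lra.
Qed.

Lemma rad_1_right t : / 2 < t < 1 -> rad 1 t = -1.
Proof.
  intros H. unfold rad, sgn. pose proof PI_RGT_0.
  assert (sin (2 ^ 1 * PI * t) < 0) by (apply sin_lt_0; simpl; nra).
  destruct (Rlt_dec 0 (sin (2 ^ 1 * PI * t))); [lra|].
  destruct (Rlt_dec (sin (2 ^ 1 * PI * t)) 0); lra.
Qed.

(* On each half of [0, 1] the Rademacher system is its own copy, rescaled, behind a fixed first sign. *)
Lemma radvec_left N t j : 0 < t < / 2 -> (1 <= j <= S N)%nat ->
  radvec t j = push_sign 1 (radvec (2 * t)) j.
Proof.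
  intros Ht Hj. destruct j as [|[|j]]; simpl; try lia.
  - apply rad_1_left; auto.
  - apply rad_S.
Qed.

Lemma radvec_right N t j : / 2 < t < 1 -> (1 <= j <= S N)%nat ->
  radvec t j = push_sign (-1) (radvec (2 * t - 1)) j.
Proof.
  intros Ht Hj. destruct j as [|[|j]]; simpl; try lia.
  - apply rad_1_right; auto.
  - apply rad_S_shift; lia.
Qed.

Lemma is_RInt_half f v a c I : 2 * a + v = 0 -> 2 * c + v = 1 ->
  is_RInt f 0 1 I -> is_RInt (fun y => f (2 * y + v)) a c (I / 2).
Proof.
  intros Ha Hc H. rewrite <- Ha, <- Hc in H.
  apply (is_RInt_comp_lin f 2 v a c), (is_RInt_scal _ _ _ (/ 2)) in H.
  replace (I / 2) with (scal (/ 2) I) by (unfold scal; simpl; unfold mult; simpl; field).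
  eapply is_RInt_ext; [|exact H]. intros x _.
  unfold scal; simpl; unfold mult; simpl; field.
Qed.

Lemma is_RInt_radvec N G : depends_on_signs N G ->
  is_RInt (fun t => G (radvec t)) 0 1 (sign_avg N G).
Proof.
  revert G; induction N; intros G HG.
  - simpl. replace (G (fun _ => 0)) with (scal (1 - 0) (G (fun _ => 0)))
      by (unfold scal; simpl; unfold mult; simpl; ring).
    eapply is_RInt_ext; [|apply (is_RInt_const 0 1 (G (fun _ => 0)))]. intros x _. apply HG; lia.
  - set (G1 := fun s => G (push_sign 1 s)). set (G2 := fun s => G (push_sign (-1) s)).
    assert (HG1 : depends_on_signs N G1).
    { intros s s' H; apply HG. intros [|[|j]] Hj; simpl; auto; try lia. apply H; lia. }
    assert (HG2 : depends_on_signs N G2).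
    { intros s s' H; apply HG. intros [|[|j]] Hj; simpl; auto; try lia. apply H; lia. }
    assert (L : is_RInt (fun t => G (radvec t)) 0 (/ 2) (sign_avg N G1 / 2)).
    { eapply is_RInt_ext;
        [|apply (is_RInt_half (fun t => G1 (radvec t)) 0 0 (/ 2)), (IHN G1 HG1); field].
      intros x Hx. rewrite Rmin_left, Rmax_right in Hx by lra.
      unfold G1. rewrite Rplus_0_r. apply HG. intros; symmetry; apply (radvec_left N); auto. }
    assert (R : is_RInt (fun t => G (radvec t)) (/ 2) 1 (sign_avg N G2 / 2)).
    { eapply is_RInt_ext;
        [|apply (is_RInt_half (fun t => G2 (radvec t)) (-1) (/ 2) 1), (IHN G2 HG2); field].
      intros x Hx. rewrite Rmin_left, Rmax_right in Hx by lra.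
      unfold G2. replace (2 * x + -1) with (2 * x - 1) by ring.
      apply HG. intros; symmetry; apply (radvec_right N); auto. }
    pose proof (is_RInt_Chasles _ _ _ _ _ _ L R) as H. simpl. fold G1 G2.
    replace ((sign_avg N G1 + sign_avg N G2) / 2) with (plus (sign_avg N G1 / 2) (sign_avg N G2 / 2));
      [exact H|unfold plus; simpl; field].
Qed.

(* The Rademacher integrals are exactly sign averages, by [is_RInt_radvec]. *)
Lemma khinchin_sign_avg r C : khin_adm r C -> forall n b,
  sqrt (fsum n (fun j => Rsqr (Rabs (b j))))
  <= C * rpow (sign_avg n (fun s => rpow (Rabs (fsum n (fun j => b j * s (S j)))) r)) (/ r).
Proof.
  intros HK n b. destruct (HK n (fun j => match j with 0 => 0 | S j' => b j' end)) as [pr H].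
  simpl in H. rewrite <- RInt_Reals in H.
  erewrite is_RInt_unique in H; [exact H|].
  apply (is_RInt_radvec n (fun s => rpow (Rabs (fsum n (fun j => b j * s (S j)))) r)).
  intros s s' E. do 2 f_equal. apply fsum_ext; intros j Hj. rewrite E; auto; lia.
Qed.

Lemma khin_adm_pos r C : khin_adm r C -> 0 < C.
Proof.
  intros HK. pose proof (khinchin_sign_avg r C HK 1 (fun _ => 1)) as H. simpl in H.
  rewrite Rplus_0_l, Rabs_R1, Rsqr_1, sqrt_1 in H.
  pose proof (rpow_ge0 ((rpow (Rabs (0 + 1 * 1)) r + rpow (Rabs (0 + 1 * -1)) r) / 2) (/ r)).
  destruct (Rle_or_lt C 0); [nra|auto].
Qed.

(** * The multiple Khinchin inequality *)

Definition index_cons (i : nat) (idx : nat -> nat) : nat -> nat :=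
  fun k => match k with 0 => i | S k' => idx k' end.

Fixpoint fprod (d : nat) (F : nat -> R) : R :=
  match d with O => 1 | S d' => F O * fprod d' (fun k => F (S k)) end.

Definition sign_chaos (d n : nat) (a : (nat -> nat) -> R) (Sg : nat -> nat -> R) : R :=
  multi_sum d n (fun idx => a idx * fprod d (fun k => Sg k (S (idx k)))).

Lemma multi_sum_S d n g :
  multi_sum (S d) n g = fsum n (fun i => multi_sum d n (fun idx => g (index_cons i idx))).
Proof. reflexivity. Qed.

Lemma multi_sum_ext d n g h : (forall idx, g idx = h idx) -> multi_sum d n g = multi_sum d n h.
Proof. revert g h; induction d; simpl; intros; auto. apply fsum_ext; intros; apply IHd; auto. Qed.

Lemma multi_sum_scal d n c g : c * multi_sum d n g = multi_sum d n (fun idx => c * g idx).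
Proof.
  revert g; induction d; simpl; intros; auto. rewrite fsum_scal. apply fsum_ext; intros; apply IHd.
Qed.

Lemma multi_sum_ge0 d n g : (forall idx, 0 <= g idx) -> 0 <= multi_sum d n g.
Proof. revert g; induction d; simpl; intros; auto. apply fsum_ge0; intros; apply IHd; auto. Qed.

Lemma sign_chaos_S d n a Sg :
  sign_chaos (S d) n a Sg
  = fsum n (fun i => sign_chaos d n (fun idx => a (index_cons i idx)) (fun k => Sg (S k)) * Sg O (S i)).
Proof.
  unfold sign_chaos. rewrite multi_sum_S. apply fsum_ext; intros i _.
  rewrite Rmult_comm, multi_sum_scal. apply multi_sum_ext; intros idx. simpl. ring.
Qed.

Lemma khinchin_lnorm q C n b : 0 < q -> khin_adm q C ->
  lnorm (2 / q) n (fun i => rpow (Rabs (b i)) q)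
  <= rpow C q * sign_avg n (fun s => rpow (Rabs (fsum n (fun i => b i * s (S i)))) q).
Proof.
  intros Hq HK. set (K := sign_avg n _).
  assert (HKs : 0 <= K) by (apply sign_avg_ge0; intros; apply rpow_ge0).
  assert (HC : 0 < C) by (apply (khin_adm_pos q); auto).
  rewrite <- rpow_lnorm by (auto; try lra; intros; apply Rabs_pos).
  rewrite (lnorm_ext 2 n _ (fun i => sqrt (Rsqr (Rabs (b i))))), <- sqrt_fsum_lnorm2
    by (intros; try apply Rle_0_sqr; rewrite sqrt_Rsqr; auto; apply Rabs_pos).
  eapply Rle_trans.
  { apply rpow_le_l; [split; [apply sqrt_pos|apply (khinchin_sign_avg q C HK)]|lra]. }
  fold K. rewrite rpow_mult_distr, rpow_rpow, Rinv_l, rpow_1_r by (auto; try apply rpow_ge0; lra).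
  lra.
Qed.

(* Squares of the inequalities [sqrt Y_i <= c Phi_i^(1/q)] summed over [i]. *)
Lemma sqrt_fsum_le_lnorm q c n Y Phi : 0 < q -> 0 <= c ->
  (forall i, (i < n)%nat -> 0 <= Y i) -> (forall i, (i < n)%nat -> 0 <= Phi i) ->
  (forall i, (i < n)%nat -> sqrt (Y i) <= c * rpow (Phi i) (/ q)) ->
  sqrt (fsum n Y) <= c * rpow (lnorm (2 / q) n Phi) (/ q).
Proof.
  intros Hq Hc HY HPhi H. rewrite sqrt_fsum_lnorm2 by auto.
  assert (Hq2 : 0 < 2 / q) by (apply Rdiv_lt_0_compat; lra).
  rewrite rpow_lnorm by (auto; apply Rinv_0_lt_compat; auto).
  replace (2 / q / / q) with 2 by (field; lra).
  rewrite <- lnorm_scal by (auto; lra || (intros; apply rpow_ge0)).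
  apply lnorm_le; [lra|]. intros i Hi; split; [apply sqrt_pos|auto].
Qed.

Lemma multi_khinchin d n q C (a : (nat -> nat) -> R) : 1 <= q <= 2 -> khin_adm q C ->
  sqrt (multi_sum d n (fun idx => Rsqr (Rabs (a idx))))
  <= C ^ d * rpow (multi_sign_avg d n (fun Sg => rpow (Rabs (sign_chaos d n a Sg)) q)) (/ q).
Proof.
  intros Hq HK. pose proof (khin_adm_pos q C HK) as HC. revert a; induction d; intros a.
  - simpl. unfold sign_chaos; simpl.
    rewrite Rmult_1_r, Rmult_1_l, rpow_rpow_inv, sqrt_Rsqr by (try apply Rabs_pos; lra). lra.
  - set (Phi := fun i => multi_sign_avg d n
                  (fun Sg => rpow (Rabs (sign_chaos d n (fun idx => a (index_cons i idx)) Sg)) q)).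
    assert (Hq2 : 1 <= 2 / q) by (apply (Rmult_le_reg_r q); [lra|]; field_simplify; lra).
    assert (HCd : 0 <= C ^ d) by (apply pow_le; lra).
    eapply Rle_trans.
    { apply (sqrt_fsum_le_lnorm q (C ^ d) n _ Phi); [lra|exact HCd| | |intros i _; apply IHd].
      - intros; apply multi_sum_ge0; intros; apply Rle_0_sqr.
      - intros; apply multi_sign_avg_ge0; intros; apply rpow_ge0. }
    change (multi_sign_avg (S d) n ?F)
      with (multi_sign_avg d n (fun Sg => sign_avg n (fun s => F (block_cons s Sg)))).
    simpl (C ^ S d). rewrite (Rmult_comm C), Rmult_assoc.
    apply Rmult_le_compat_l; auto.
    rewrite <- (rpow_rpow_inv C q) at 1 by lra.
    rewrite <- rpow_mult_distr, <- multi_sign_avg_scal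
      by (try apply rpow_ge0; apply multi_sign_avg_ge0; intros; apply sign_avg_ge0; intros; apply rpow_ge0).
    apply rpow_le_l; [split; [apply lnorm_ge0|]|left; apply Rinv_0_lt_compat; lra].
    eapply Rle_trans; [apply lnorm_multi_sign_avg_le; auto; intros; apply rpow_ge0|].
    apply multi_sign_avg_le; intros Sg _.
    erewrite sign_avg_ext by (intros; rewrite sign_chaos_S; reflexivity).
    apply khinchin_lnorm; auto; lra.
Qed.

(** * Multilinear forms on finitely supported vectors *)

Definition finitely_supported (v : nat -> R) : Prop := exists N, forall i, (N <= i)%nat -> v i = 0.

Definition evec_comb (n : nat) (c : nat -> R) : nat -> R := fun i => fsum n (fun j => c j * evec j i).

Definition sign_vec (n : nat) (s : nat -> R) : nat -> R := evec_comb n (fun j => s (S j)).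

Lemma fsum_from f N m : (forall i, (N <= i)%nat -> f i = 0) -> (N <= m)%nat -> fsum m f = fsum N f.
Proof. intros H Hm. induction Hm; auto. simpl. rewrite IHHm, H by lia. ring. Qed.

Lemma infinite_sum_finitely_supported f N : (forall i, (N <= i)%nat -> f i = 0) ->
  infinite_sum f (fsum N f).
Proof.
  intros H eps Heps. exists N. intros m Hm.
  replace (sum_f_R0 f m) with (fsum (S m) f).
  - rewrite (fsum_from f N (S m)) by (auto; lia). unfold R_dist. rewrite Rminus_diag, Rabs_R0; auto.
  - clear. induction m; simpl in *; [ring|]. rewrite IHm; ring.
Qed.

Lemma zero_finitely_supported : finitely_supported (fun _ => 0).
Proof. exists O; auto. Qed.

Lemma finitely_supported_cv v : finitely_supported v -> Un_cv v 0.
Proof.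
  intros [N H] eps Heps. exists N. intros m Hm. unfold R_dist. rewrite H, Rminus_diag, Rabs_R0 by lia.
  auto.
Qed.

Lemma finitely_supported_inX e v : finitely_supported v -> inX e v.
Proof.
  intros Hv. destruct e as [p|]; simpl; [|apply finitely_supported_cv; auto].
  destruct Hv as [N H]. exists (fsum N (fun i => rpow (Rabs (v i)) p)).
  apply infinite_sum_finitely_supported. intros i Hi. rewrite H, Rabs_R0 by auto. apply rpow_0_l.
Qed.

Lemma evec_finitely_supported i : finitely_supported (evec i).
Proof. exists (S i). intros j Hj. unfold evec. destruct (Nat.eq_dec i j); [lia|auto]. Qed.

Lemma evec_comb_val n c i : evec_comb n c i = if Nat.ltb i n then c i else 0.
Proof.
  induction n; [reflexivity|]. unfold evec_comb in *; simpl. rewrite IHn. unfold evec.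
  destruct (Nat.ltb_spec i n), (Nat.ltb_spec i (S n)), (Nat.eq_dec n i); subst; try lia; ring.
Qed.

Lemma evec_comb_finitely_supported n c : finitely_supported (evec_comb n c).
Proof.
  exists n. intros i Hi. rewrite evec_comb_val. destruct (Nat.ltb_spec i n); auto; lia.
Qed.

Lemma inBall_Fin_evec_comb p n c : 0 < p -> fsum n (fun j => rpow (Rabs (c j)) p) <= 1 ->
  inBall (Fin p) (evec_comb n c).
Proof.
  intros Hp H. exists (fsum n (fun j => rpow (Rabs (c j)) p)). split.
  - replace (fsum n (fun j => rpow (Rabs (c j)) p))
      with (fsum n (fun i => rpow (Rabs (evec_comb n c i)) p)).
    + apply infinite_sum_finitely_supported. intros i Hi.
      rewrite evec_comb_val. destruct (Nat.ltb_spec i n); try lia. rewrite Rabs_R0; apply rpow_0_l.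
    + apply fsum_ext; intros i Hi. rewrite evec_comb_val. destruct (Nat.ltb_spec i n); auto; lia.
  - rewrite <- (rpow_1_l (/ p)). apply rpow_le_l; [split; [apply fsum_ge0; intros; apply rpow_ge0|auto]|].
    left; apply Rinv_0_lt_compat; auto.
Qed.

Lemma inBall_Inf_evec_comb n c : (forall j, (j < n)%nat -> Rabs (c j) <= 1) ->
  inBall Inf (evec_comb n c).
Proof.
  intros H. split; [apply finitely_supported_cv, evec_comb_finitely_supported|].
  intros i. rewrite evec_comb_val. destruct (Nat.ltb_spec i n); auto. rewrite Rabs_R0; lra.
Qed.

Lemma inBall_zero e : inBall e (fun _ => 0).
Proof.
  destruct e as [p|].
  - exists 0. split; [apply (infinite_sum_finitely_supported _ 0)|rewrite rpow_0_l; lra].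
    intros; rewrite Rabs_R0; apply rpow_0_l.
  - apply (inBall_Inf_evec_comb 0 (fun _ => 0)). intros; lia.
Qed.

Lemma upd_same x k v : upd x k v k = v.
Proof. unfold upd. destruct (Nat.eq_dec k k); congruence. Qed.

Lemma upd_upd x k v w : upd (upd x k v) k w = upd x k w.
Proof. apply functional_extensionality; intros j. unfold upd. destruct (Nat.eq_dec j k); auto. Qed.

Lemma upd_id x k : upd x k (x k) = x.
Proof. apply functional_extensionality; intros j. unfold upd. destruct (Nat.eq_dec j k); subst; auto. Qed.

Lemma upd_finitely_supported x k v : (forall j, finitely_supported (x j)) -> finitely_supported v ->
  forall j, finitely_supported (upd x k v j).
Proof. intros; unfold upd; destruct (Nat.eq_dec j k); auto. Qed.

Definition glue (o : nat) (V W : nat -> nat -> R) : nat -> nat -> R :=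
  fun k => if Nat.ltb k o then V k else W (k - o)%nat.

Lemma glue_finitely_supported o V W : (forall k, finitely_supported (V k)) ->
  (forall k, finitely_supported (W k)) -> forall k, finitely_supported (glue o V W k).
Proof. intros; unfold glue; destruct (Nat.ltb k o); auto. Qed.

Lemma upd_glue o V W v : upd (glue o V W) o v = glue o V (upd W 0 v).
Proof.
  apply functional_extensionality; intros k. unfold upd, glue.
  destruct (Nat.eq_dec k o), (Nat.ltb_spec k o), (Nat.eq_dec (k - o) 0); subst; auto; lia.
Qed.

Lemma upd_glue_S o V W v : upd (glue o V W) o v = glue (S o) (upd V o v) (fun k => W (S k)).
Proof.
  apply functional_extensionality; intros k. unfold upd, glue.
  destruct (Nat.eq_dec k o), (Nat.ltb_spec k o), (Nat.ltb_spec k (S o)); subst; try lia; auto.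
  f_equal; lia.
Qed.

Lemma glue_S o V W : glue o V W = glue (S o) (upd V o (W O)) (fun k => W (S k)).
Proof.
  apply functional_extensionality; intros k. unfold upd, glue.
  destruct (Nat.ltb_spec k o), (Nat.ltb_spec k (S o)), (Nat.eq_dec k o); subst; try lia; auto.
  - rewrite Nat.sub_diag; auto.
  - f_equal; lia.
Qed.

Section Multilinear.
Variables (M : nat) (e : Exp) (T : (nat -> nat -> R) -> R).
Hypothesis HML : is_multilinear M e T.

Lemma multilinear_zero x k : (k < M)%nat -> (forall j, finitely_supported (x j)) ->
  T (upd x k (fun _ => 0)) = 0.
Proof.
  intros Hk Hx. set (x0 := upd x k (fun _ => 0)).
  assert (Hx0 : forall j, finitely_supported (x0 j))
    by (apply upd_finitely_supported; auto; apply zero_finitely_supported).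
  pose proof (HML x0 k (fun _ => 0) 1 Hk (fun j _ => finitely_supported_inX _ _ (Hx0 j))
                (finitely_supported_inX _ _ zero_finitely_supported)) as E.
  unfold x0 in E. rewrite !upd_upd, !upd_same in E.
  replace (fun _ : nat => 1 * 0 + 0) with (fun _ : nat => 0) in E
    by (apply functional_extensionality; intros; ring).
  unfold x0. lra.
Qed.

Lemma multilinear_evec_comb x k n c : (k < M)%nat -> (forall j, finitely_supported (x j)) ->
  T (upd x k (evec_comb n c)) = fsum n (fun j => c j * T (upd x k (evec j))).
Proof.
  intros Hk Hx. induction n; [apply multilinear_zero; auto|].
  set (x' := upd x k (evec n)).
  assert (Hx' : forall j, finitely_supported (x' j))
    by (apply upd_finitely_supported; auto; apply evec_finitely_supported).
  pose proof (HML x' k (evec_comb n c) (c n) Hk (fun j _ => finitely_supported_inX _ _ (Hx' j))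
                (finitely_supported_inX _ _ (evec_comb_finitely_supported n c))) as E.
  unfold x' in E. rewrite !upd_upd, !upd_same in E.
  simpl. rewrite <- IHn, Rplus_comm, <- E. do 2 f_equal.
  apply functional_extensionality; intros i. unfold evec_comb; simpl. ring.
Qed.

Hypothesis HD : depends_on_first M T.

Lemma multilinear_sign_chaos n d : forall o V Sg, (o + d = M)%nat ->
  (forall k, finitely_supported (V k)) ->
  T (glue o V (fun k => sign_vec n (Sg k)))
  = sign_chaos d n (fun idx => T (glue o V (fun k => evec (idx k)))) Sg.
Proof.
  induction d; intros o V Sg Ho HV.
  - unfold sign_chaos; simpl. rewrite Rmult_1_r. apply HD. intros k Hk. unfold glue.
    destruct (Nat.ltb_spec k o); auto; lia.
  - set (W := fun k => sign_vec n (Sg k)).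
    assert (HW : forall k, finitely_supported (W k))
      by (intros; apply evec_comb_finitely_supported).
    rewrite <- (upd_id W 0), <- upd_glue.
    change (W 0%nat) with (evec_comb n (fun j => Sg 0%nat (S j))).
    rewrite multilinear_evec_comb by (try lia; apply glue_finitely_supported; auto).
    rewrite sign_chaos_S. apply fsum_ext; intros j _. rewrite Rmult_comm. f_equal.
    rewrite upd_glue_S; unfold W; rewrite (IHd (S o)); try lia.
    2:{ apply upd_finitely_supported; auto; apply evec_finitely_supported. }
    f_equal. apply functional_extensionality; intros idx. rewrite (glue_S o V). reflexivity.
Qed.
End Multilinear.

(** * Duality between [X_p] and [l^q] *)

Definition exp_gt1 (e : Exp) : Prop :=
  match e with Fin p => 1 < p | Inf => True end.

Lemma exp_ge2_gt1 e : exp_ge2 e -> exp_gt1 e.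
Proof. destruct e; simpl; auto; lra. Qed.

Lemma conj_exp_range e : exp_ge2 e -> 1 <= conj_exp e <= 2.
Proof.
  destruct e as [p|]; simpl; intros H; [|lra].
  split; apply (Rmult_le_reg_r (p - 1)); try lra; field_simplify; lra.
Qed.

(* [sg 0 = 1], so that [sg x * x = |x|] and [|sg x| = 1] hold everywhere. *)
Definition sg (x : R) : R := if Rle_dec 0 x then 1 else -1.

Lemma sg_mul x : sg x * x = Rabs x.
Proof. unfold sg; destruct (Rle_dec 0 x); [rewrite Rabs_right|rewrite Rabs_left]; lra. Qed.

Lemma Rabs_sg x : Rabs (sg x) = 1.
Proof. unfold sg; destruct (Rle_dec 0 x); [apply Rabs_R1|rewrite Rabs_left; lra]. Qed.

Lemma Rabs_mul_rpow_sub1 x q : Rabs x * rpow (Rabs x) (q - 1) = rpow (Rabs x) q.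
Proof.
  destruct (Rabs_pos x) as [H|H]; [|rewrite <- H, !rpow_0_l; ring].
  replace q with (1 + (q - 1)) at 2 by ring. rewrite rpow_plus, rpow_1_r; lra.
Qed.

(* Equality in Hoelder's inequality: [c_j = sg(b_j) |b_j|^(q-1) / B^(1/p)] with [B = sum |b_j|^q]. *)
Lemma exists_norming_Fin p n b : 1 < p ->
  let q := p / (p - 1) in
  exists c, fsum n (fun j => rpow (Rabs (c j)) p) <= 1 /\
            fsum n (fun j => c j * b j) = rpow (fsum n (fun j => rpow (Rabs (b j)) q)) (/ q).
Proof.
  intros Hp q.
  destruct (fsum_ge0 n (fun j => rpow (Rabs (b j)) q) (fun j _ => rpow_ge0 _ _)) as [HB|HB].
  2:{ exists (fun _ => 0). rewrite Rabs_R0, rpow_0_l, <- HB, rpow_0_l, fsum_zero.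
      split; [lra|]. rewrite (fsum_ext n _ (fun _ => 0)) by (intros; ring). apply fsum_zero. }
  set (B := fsum n (fun j => rpow (Rabs (b j)) q)) in *. assert (HBp : 0 < rpow B (/ p)) by (apply rpow_gt0; auto).
  assert (Eqp : (q - 1) * p = q) by (unfold q; field; lra).
  exists (fun j => sg (b j) * rpow (Rabs (b j)) (q - 1) / rpow B (/ p)). split.
  - right. rewrite (fsum_ext n _ (fun j => / B * rpow (Rabs (b j)) q)).
    + rewrite <- fsum_scal. fold B. field; lra.
    + intros j _. unfold Rdiv. rewrite !Rabs_mult, Rabs_sg, Rmult_1_l, Rabs_inv.
      rewrite (Rabs_right (rpow _ _)), (Rabs_right (rpow B _)) by (apply Rle_ge, rpow_ge0).
      rewrite rpow_mult_distr, rpow_inv_l, !rpow_rpow, Eqp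
        by (try apply rpow_ge0; try apply Rabs_pos; try lra; left; apply Rinv_0_lt_compat; auto).
      replace (/ p * p) with 1 by (field; lra). rewrite rpow_1_r by lra. field; lra.
  - rewrite (fsum_ext n _ (fun j => / rpow B (/ p) * rpow (Rabs (b j)) q)).
    + rewrite <- fsum_scal. fold B.
      replace (/ q) with (1 + - / p) by (unfold q; field; lra).
      rewrite rpow_plus, rpow_1_r, rpow_opp by lra. field; lra.
    + intros j _. rewrite <- (Rabs_mul_rpow_sub1 (b j) q), <- (sg_mul (b j)). field; lra.
Qed.

Lemma exists_norming_comb e n b : exp_gt1 e ->
  exists c, inBall e (evec_comb n c) /\
            fsum n (fun j => c j * b j)
            = rpow (fsum n (fun j => rpow (Rabs (b j)) (conj_exp e))) (/ conj_exp e).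
Proof.
  destruct e as [p|]; simpl; intros Hp.
  - destruct (exists_norming_Fin p n b Hp) as [c [Hc E]].
    exists c; split; auto. apply inBall_Fin_evec_comb; auto; lra.
  - exists (fun j => sg (b j)). split.
    + apply inBall_Inf_evec_comb. intros; rewrite Rabs_sg; lra.
    + rewrite Rinv_1, rpow_1_r by (apply fsum_ge0; intros; apply rpow_ge0).
      apply fsum_ext; intros. rewrite sg_mul, rpow_1_r; auto. apply Rabs_pos.
Qed.

Lemma glue1_eq v W : glue 1 (fun _ => v) W = fun k => match k with O => v | S k' => W k' end.
Proof.
  apply functional_extensionality; intros [|k]; unfold glue; simpl; auto. rewrite Nat.sub_0_r; auto.
Qed.

Lemma lub_norm_set_ge0 M e T normT : is_lub (norm_set M e T) normT -> 0 <= normT.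
Proof.
  intros [Hub _]. apply Rle_trans with (Rabs (T (fun _ _ => 0))); [apply Rabs_pos|].
  apply Hub. exists (fun _ _ => 0). split; auto. intros; apply inBall_zero.
Qed.

Section Duality.
Variables (M : nat) (e : Exp) (T : (nat -> nat -> R) -> R) (normT : R) (n : nat).
Hypothesis HM : (1 <= M)%nat.
Hypothesis HML : is_multilinear M e T.
Hypothesis Hlub : is_lub (norm_set M e T) normT.

Lemma norm_bound_evec_comb c Sg : unit_bounded_blocks Sg -> inBall e (evec_comb n c) ->
  Rabs (fsum n (fun j => c j * T (glue 1 (fun _ => evec j) (fun k => sign_vec n (Sg k)))))
  <= normT.
Proof.
  intros HS Hc. set (W := fun k => sign_vec n (Sg k)).
  assert (HW : forall k, finitely_supported (W k)) by (intros; apply evec_comb_finitely_supported).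
  assert (Hupd : forall v, glue 1 (fun _ => v) W = upd (glue 1 (fun _ => evec O) W) O v)
    by (intros; rewrite !glue1_eq; apply functional_extensionality; intros [|k]; auto).
  rewrite (fsum_ext n _ (fun j => c j * T (upd (glue 1 (fun _ => evec O) W) O (evec j))))
    by (intros; rewrite Hupd; auto).
  rewrite <- (multilinear_evec_comb M e T HML), <- Hupd; auto.
  2:{ apply glue_finitely_supported; auto; intros; apply evec_finitely_supported. }
  apply (proj1 Hlub). exists (glue 1 (fun _ => evec_comb n c) W). split; auto.
  rewrite glue1_eq. intros [|k] Hk; simpl; auto.
  apply inBall_Inf_evec_comb. intros; apply HS.
Qed.

Lemma fsum_rpow_le_norm Sg : exp_gt1 e -> unit_bounded_blocks Sg ->
  fsum n (fun i => rpow (Rabs (T (glue 1 (fun _ => evec i) (fun k => sign_vec n (Sg k))))) (conj_exp e))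
  <= rpow normT (conj_exp e).
Proof.
  intros He HS.
  set (b := fun i => T (glue 1 (fun _ => evec i) (fun k => sign_vec n (Sg k)))).
  destruct (exists_norming_comb e n b He) as [c [Hc E]].
  pose proof (norm_bound_evec_comb c Sg HS Hc) as Hn.
  change (Rabs (fsum n (fun j => c j * b j)) <= normT) in Hn. rewrite E in Hn.
  assert (Hq : 0 < conj_exp e)
    by (destruct e; simpl in *; [apply Rdiv_lt_0_compat|]; lra).
  rewrite Rabs_right in Hn by (apply Rle_ge, rpow_ge0).
  rewrite <- (rpow_inv_rpow (fsum n _) (conj_exp e)) by (try apply fsum_ge0; intros; try apply rpow_ge0; lra).
  apply rpow_le_l; [split; [apply rpow_ge0|exact Hn]|lra].
Qed.
End Duality.

Lemma lhs_trunc_lnorm M e T n : 0 < conj_exp e ->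
  lhs_trunc M e T n
  = lnorm (conj_exp e) n (fun i1 => sqrt (multi_sum (M - 1) n (fun idx =>
      Rsqr (Rabs (T (fun k => match k with O => evec i1 | S k' => evec (idx k') end)))))).
Proof.
  intros Hq. unfold lhs_trunc, lnorm. f_equal. apply fsum_ext; intros i _.
  rewrite <- rpow_sqrt, rpow_rpow by (apply multi_sum_ge0; intros; apply Rle_0_sqr).
  f_equal; field.
Qed.

(* Multiple Khinchin inequality in the last [M - 1] variables, then duality in the first one. *)
Lemma lhs_trunc_le_khin_adm M e T normT C n :
  (1 <= M)%nat -> exp_ge2 e -> depends_on_first M T -> is_multilinear M e T ->
  is_lub (norm_set M e T) normT -> khin_adm (conj_exp e) C ->
  lhs_trunc M e T n <= C ^ (M - 1) * normT.
Proof.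
  intros HM He HD HML Hlub HK.
  pose proof (conj_exp_range e He) as Hq. rewrite lhs_trunc_lnorm by lra.
  set (q := conj_exp e) in *.
  assert (HC : 0 <= C ^ (M - 1)) by (apply pow_le; left; apply (khin_adm_pos q); auto).
  set (Phi := fun i => multi_sign_avg (M - 1) n (fun Sg =>
           rpow (Rabs (T (glue 1 (fun _ => evec i) (fun k => sign_vec n (Sg k))))) q)).
  assert (HPhi : forall i, 0 <= Phi i)
    by (intros; apply multi_sign_avg_ge0; intros; apply rpow_ge0).
  assert (Hsum : fsum n Phi <= rpow normT q).
  { unfold Phi. rewrite <- multi_sign_avg_fsum, <- (multi_sign_avg_const (M - 1) n (rpow normT q)).
    apply multi_sign_avg_le. intros Sg HS.
    apply (fsum_rpow_le_norm M e T normT n); auto. apply exp_ge2_gt1; auto. }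
  eapply Rle_trans.
  { apply (lnorm_le q n _ (fun i => C ^ (M - 1) * rpow (Phi i) (/ q))); [lra|].
    intros i _. split; [apply sqrt_pos|].
    replace (Phi i) with (multi_sign_avg (M - 1) n (fun Sg =>
      rpow (Rabs (sign_chaos (M - 1) n (fun idx =>
        T (fun k => match k with O => evec i | S k' => evec (idx k') end)) Sg)) q)).
    - apply multi_khinchin; auto.
    - unfold Phi. apply multi_sign_avg_ext; intros Sg.
      rewrite (multilinear_sign_chaos M e T HML HD n (M - 1) 1)
        by (try lia; intros; apply evec_finitely_supported).
      do 3 f_equal. apply functional_extensionality; intros idx. rewrite glue1_eq. reflexivity. }
  rewrite lnorm_scal by (auto; try lra; intros; apply rpow_ge0).
  apply Rmult_le_compat_l; auto.
  replace (lnorm q n (fun i => rpow (Phi i) (/ q))) with (rpow (lnorm 1 n Phi) (/ q)).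
  - unfold lnorm. rewrite Rinv_1, rpow_1_r by (apply fsum_ge0; intros; apply rpow_ge0).
    rewrite (fsum_ext n _ Phi) by (intros; apply rpow_1_r; auto).
    rewrite <- (rpow_rpow_inv normT q) by (try apply (lub_norm_set_ge0 M e T); auto; lra).
    apply rpow_le_l; [split; [apply fsum_ge0; intros; auto|auto]|left; apply Rinv_0_lt_compat; lra].
  - rewrite rpow_lnorm by (auto; try lra; apply Rinv_0_lt_compat; lra). f_equal. field; lra.
Qed.

Lemma pow_right_continuous m A eps : 0 < eps -> exists B, A < B /\ B ^ m < A ^ m + eps.
Proof.
  intros He. destruct (derivable_continuous_pt (fun y => y ^ m) A (derivable_pt_pow m A) eps He)
    as [alp [Ha Hx]].
  exists (A + alp / 2). split; [lra|].
  assert (Hd : D_x no_cond A (A + alp / 2) /\ Rdist (A + alp / 2) A < alp).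
  { split; [split; [exact I|lra]|]. unfold Rdist. rewrite Rabs_right; lra. }
  specialize (Hx _ Hd). simpl in Hx. unfold Rdist in Hx.
  pose proof (Rle_abs ((A + alp / 2) ^ m - A ^ m)). lra.
Qed.

(* By continuity of [x^m] at the infimum [A]. *)
Lemma le_pow_glb (P : R -> Prop) A m L N : 0 <= N -> (forall C, P C -> 0 < C) ->
  (forall B, (forall C, P C -> B <= C) -> B <= A) ->
  (forall C, P C -> L <= C ^ m * N) -> L <= A ^ m * N.
Proof.
  intros HN Hpos Hglb HL.
  assert (HP : exists C, P C).
  { apply NNPP. intros Hno. assert (A + 1 <= A); [|lra].
    apply Hglb. intros C HC. exfalso; eauto. }
  destruct HN as [HN|<-]; [|destruct HP as [C HC]; specialize (HL C HC); lra].
  apply Rnot_lt_le. intros Hlt.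
  destruct (pow_right_continuous m A ((L - A ^ m * N) / N)) as [B [HAB HB]];
    [apply Rdiv_lt_0_compat; lra|].
  apply (Rmult_lt_compat_r N) in HB; auto.
  replace ((A ^ m + (L - A ^ m * N) / N) * N) with L in HB by (field; lra).
  assert (HC : exists C, P C /\ C < B).
  { apply NNPP. intros Hno. assert (B <= A); [|lra].
    apply Hglb. intros C HC. apply Rnot_lt_le. intros HCB. eauto. }
  destruct HC as [C [HC HCB]].
  pose proof (HL C HC). pose proof (Hpos C HC).
  assert (C ^ m <= B ^ m) by (apply pow_incr; lra). nra.
Qed.

Theorem theorem4p1 (M : nat) (e : Exp) (T : (nat -> nat -> R) -> R) (normT A : R) :
  (3 <= M)%nat ->
  exp_ge2 e ->
  depends_on_first M T ->
  is_multilinear M e T ->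
  is_lub (norm_set M e T) normT ->
  is_khinchin_const (conj_exp e) A ->
  forall n : nat, lhs_trunc M e T n <= A ^ (M - 1) * normT.
Proof.
  intros HM He HD HML Hlub [_ HA] n.
  apply (le_pow_glb (khin_adm (conj_exp e))); auto.
  - apply (lub_norm_set_ge0 M e T); auto.
  - apply khin_adm_pos.
  - intros C HC. apply lhs_trunc_le_khin_adm; auto. lia.
Qed.
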